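(* Let $\mathcal{L}$ be a block diagram language with compositional semantics $[\![\cdot]\!] : \mathcal{L} \to \mathcal{S}$ into a traced symmetric monoidal category $(\mathcal{S},\otimes,\mathsf{Tr})$, and let $H : \mathcal{S} \to \mathcal{H}$ be a verification functor (as defined in the context). Then the formal system $\mathcal{H}(\mathcal{L},[\![\cdot]\!],H)$ is sound and complete: for every block diagram $A$ of $\mathcal{L}$ with $[\![A]\!] : X \to Y$ and every $P \in H(X)$, $Q \in H(Y)$, the triple $\{P\}\,A\,\{Q\}$ is derivable in $\mathcal{H}(\mathcal{L},[\![\cdot]\!],H)$ if and only if $(P,Q) \in H([\![A]\!])$.
   Context: Hoare category: a relation $r \subseteq X \times Y$ between pre-ordered sets $(X,\sqsubseteq_X)$, $(Y,\sqsubseteq_Y)$ is monotone if $(P,Q)\in r$, $P' \sqsubseteq_X P$ and $Q \sqsubseteq_Y Q'$ imply $(P',Q')\in r$. $\mathcal{H}$ is the category of pre-ordered sets and monotone relations (composition is relational composition, $(P,R)\in s\circ r$ iff $\exists Q\,((P,Q)\in r \wedge (Q,R)\in s)$); it is a traced symmetric monoidal category with monoidal product the cartesian product of pre-orders (coordinatewise order), product of relations $r\times s = \{((P,R),(Q,S)) : (P,Q)\in r,(R,S)\in s\}$, and trace: for $r \subseteq (X\times Z)\times(Y\times Z)$, $(P,R)\in\mathsf{Tr}(r)$ iff there is $Q\in Z$ with $((P,Q),(R,Q))\in r$. Block diagram language: a set $\mathcal{L}^b$ of basic diagrams, closed under the constructors $\mathsf{Seq}(A,B)$ (sequential composition), $\mathsf{Par}(A,B)$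 (parallel composition) and $\mathsf{Fb}(A)$ (feedback). The semantics is compositional: $[\![\mathsf{Seq}(A,B)]\!] = [\![B]\!]\circ[\![A]\!]$, $[\![\mathsf{Par}(A,B)]\!] = [\![A]\!]\otimes[\![B]\!]$, $[\![\mathsf{Fb}(A)]\!] = \mathsf{Tr}([\![A]\!])$, where $\mathsf{Fb}(A)$ is formed only when $[\![A]\!] : X\otimes Z\to Y\otimes Z$, giving $\mathsf{Tr}([\![A]\!]) : X\to Y$. Verification functor: a mapping $H$ assigning to each object $X$ in the image of $[\![\cdot]\!]$ a pre-ordered set $H(X)$, with $H(X\otimes Y) = H(X)\times H(Y)$, and to each morphism $f:X\to Y$ in that image a monotone relation $H(f)\subseteq H(X)\times H(Y)$, such that for all diagrams $A,B$: $H([\![\mathsf{Seq}(A,B)]\!]) = H([\![B]\!])\circ H([\![A]\!])$, $H([\![\mathsf{Par}(A,B)]\!]) = H([\![A]\!])\times H([\![B]\!])$, and $H([\![\mathsf{Fb}(A)]\!]) = \mathsf{Tr}_{\mathcal{H}}(H([\![A]\!]))$. The system $\mathcal{H}(\mathcal{L},[\![\cdot]\!],H)$ derives triples $\{P\}A\{Q\}$ by the rules: (Ax) $\{P\}A\{Q\}$ with no premises, provided $A\in\mathcal{L}^b$ and $(P,Q)\in H([\![A]\!])$; (Con) from $\{P\}A\{Q\}$ infer $\{P'\}A\{Q'\}$ provided $P'\sqsubseteq P$ and $Q\sqsubseteq Q'$; (Par) from $\{P\}A\{Q\}$ and $\{R\}B\{S\}$ infer $\{(P,R)\}\mathsf{Par}(A,B)\{(Q,S)\}$;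 (Seq) from $\{P\}A\{Q\}$ and $\{Q\}B\{R\}$ infer $\{P\}\mathsf{Seq}(A,B)\{R\}$; (Fb) from $\{(P,Q)\}A\{(R,Q)\}$ infer $\{P\}\mathsf{Fb}(A)\{R\}$. *)

From Stdlib Require Import RelationClasses.
Set Implicit Arguments.

(** Signature of a traced symmetric monoidal category (S, ⊗, Tr):
    objects, hom-types, composition, monoidal product on objects and
    morphisms, and trace.  [comp f g] is g ∘ f.  The TSMC axioms are not
    needed. *)
Record TSMCSig := {
  Ob : Type;
  Hom : Ob -> Ob -> Type;
  tens : Ob -> Ob -> Ob;
  comp : forall X Y Z, Hom X Y -> Hom Y Z -> Hom X Z;
  tensm : forall X Y X' Y', Hom X Y -> Hom X' Y' -> Hom (tens X X') (tens Y Y');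
  trace : forall X Y Z, Hom (tens X Z) (tens Y Z) -> Hom X Y
}.

Arguments comp {_ _ _ _} _ _.
Arguments tensm {_ _ _ _ _} _ _.
Arguments trace {_ _ _ _} _.

Section Lang.
Variable S : TSMCSig.
Variable Bas : Ob S -> Ob S -> Type.
Variable bsem : forall X Y, Bas X Y -> Hom S X Y.

(** The block diagram language L generated from L^b by Seq, Par, Fb
    (intrinsically typed: Seq only when the interfaces match, Fb only when
    the semantics has type X ⊗ Z -> Y ⊗ Z). *)
Inductive diag : Ob S -> Ob S -> Type :=
| DBasic X Y : Bas X Y -> diag X Y
| DSeq X Y Z : diag X Y -> diag Y Z -> diag X Z
| DPar X Y X' Y' : diag X Y -> diag X' Y' -> diag (tens S X X') (tens S Y Y')
| DFb X Y Z : diag (tens S X Z) (tens S Y Z) -> diag X Y.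
Arguments DBasic {X Y} _.
Arguments DSeq {X Y Z} _ _.
Arguments DPar {X Y X' Y'} _ _.
Arguments DFb {X Y Z} _.

Fixpoint sem X Y (A : diag X Y) : Hom S X Y :=
  match A in diag X Y return Hom S X Y with
  | @DBasic _ _ b => bsem b
  | @DSeq _ _ _ A B => comp (sem A) (sem B)
  | @DPar _ _ _ _ A B => tensm (sem A) (sem B)
  | @DFb _ _ _ A => trace (sem A)
  end.

(** A verification functor H : S -> Hoare category.
    [HO X] is the pre-ordered set H(X) with preorder [Hle X];
    [hpair] is the identification H(X) × H(Y) = H(X ⊗ Y) (an order
    isomorphism for the coordinatewise order); [HM f] is the relation H(f). *)
Record VerifFunctor := {
  HO : Ob S -> Type;
  Hle : forall X, HO X -> HO X -> Prop;
  Hle_preorder : forall X, PreOrder (@Hle X);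
  hpair : forall X Y, HO X -> HO Y -> HO (tens S X Y);
  hpair_inj : forall X Y (p p' : HO X) (q q' : HO Y),
      hpair p q = hpair p' q' -> p = p' /\ q = q';
  hpair_surj : forall X Y (u : HO (tens S X Y)), exists p q, u = hpair p q;
  hpair_le : forall X Y (p p' : HO X) (q q' : HO Y),
      Hle (hpair p q) (hpair p' q') <-> Hle p p' /\ Hle q q';
  HM : forall X Y, Hom S X Y -> HO X -> HO Y -> Prop;
  HM_monotone : forall X Y (A : diag X Y) P P' Q Q',
      HM (sem A) P Q -> Hle P' P -> Hle Q Q' -> HM (sem A) P' Q';
  HM_seq : forall X Y Z (A : diag X Y) (B : diag Y Z) P R,
      HM (sem (DSeq A B)) P R <-> exists Q, HM (sem A) P Q /\ HM (sem B) Q R;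
  HM_par : forall X Y X' Y' (A : diag X Y) (B : diag X' Y') P R Q T,
      HM (sem (DPar A B)) (hpair P R) (hpair Q T) <->
      HM (sem A) P Q /\ HM (sem B) R T;
  HM_fb : forall X Y Z (A : diag (tens S X Z) (tens S Y Z)) P R,
      HM (sem (DFb A)) P R <-> exists Q, HM (sem A) (hpair P Q) (hpair R Q)
}.

Arguments Hle _ {X} _ _.
Arguments hpair _ {X Y} _ _.
Arguments HM _ {X Y} _ _ _.

Inductive derivable (H : VerifFunctor) :
    forall X Y, diag X Y -> HO H X -> HO H Y -> Prop :=
| rule_Ax X Y (b : Bas X Y) P Q :
    HM H (sem (DBasic b)) P Q -> derivable H (DBasic b) P Q
| rule_Con X Y (A : diag X Y) P Q P' Q' :
    derivable H A P Q -> Hle H P' P -> Hle H Q Q' -> derivable H A P' Q'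
| rule_Par X Y X' Y' (A : diag X Y) (B : diag X' Y') P Q R T :
    derivable H A P Q -> derivable H B R T ->
    derivable H (DPar A B) (hpair H P R) (hpair H Q T)
| rule_Seq X Y Z (A : diag X Y) (B : diag Y Z) P Q R :
    derivable H A P Q -> derivable H B Q R -> derivable H (DSeq A B) P R
| rule_Fb X Y Z (A : diag (tens S X Z) (tens S Y Z)) P Q R :
    derivable H A (hpair H P Q) (hpair H R Q) -> derivable H (DFb A) P R.

End Lang.

Arguments DBasic {S Bas X Y} _.
Arguments DSeq {S Bas X Y Z} _ _.
Arguments DPar {S Bas X Y X' Y'} _ _.
Arguments DFb {S Bas X Y Z} _.
Arguments Hle {S Bas bsem} _ {X} _ _.
Arguments hpair {S Bas bsem} _ {X Y} _ _.
Arguments HM {S Bas bsem} _ {X Y} _ _ _.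


(* Soundness is an induction on derivations: each rule is one direction of
   monotonicity or of the compositionality equations of H.  Completeness is
   an induction on the diagram: the other direction of those equations yields
   the intermediate assertion for Seq and Fb, and surjectivity of pairing
   splits the pre- and postcondition of a Par.  Rule Con is needed only for
   soundness. *)

Section HoareLogic.

Variable S : TSMCSig.
Variable Bas : Ob S -> Ob S -> Type.
Variable bsem : forall X Y, Bas X Y -> Hom S X Y.
Variable H : VerifFunctor S Bas bsem.

Lemma derivable_sound X Y (A : diag S Bas X Y) P Q :
  derivable H A P Q -> HM H (sem bsem A) P Q.
Proof.
  induction 1 as [X Y b P Q HbPQ
                 | X Y A P Q P' Q' _ IHA HP'P HQQ'
                 | X Y X' Y' A B P Q R T _ IHA _ IHB
                 | X Y Z A B P Q R _ IHA _ IHB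
                 | X Y Z A P Q R _ IHA].
  - exact HbPQ.
  - exact (HM_monotone H A _ _ _ _ IHA HP'P HQQ').
  - apply HM_par; split; assumption.
  - apply HM_seq; exists Q; split; assumption.
  - apply HM_fb; exists Q; exact IHA.
Qed.

Lemma derivable_complete X Y (A : diag S Bas X Y) P Q :
  HM H (sem bsem A) P Q -> derivable H A P Q.
Proof.
  revert P Q; induction A as [X Y b | X Y Z A IHA B IHB
                             | X Y X' Y' A IHA B IHB | X Y Z A IHA];
    intros P Q HPQ.
  - apply rule_Ax; exact HPQ.
  - apply HM_seq in HPQ as [M [HPM HMQ]].
    eapply rule_Seq; [apply IHA, HPM | apply IHB, HMQ].
  - destruct (hpair_surj H _ _ P) as [p [r ->]].
    destruct (hpair_surj H _ _ Q) as [q [t ->]].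
    apply HM_par in HPQ as [Hpq Hrt].
    apply rule_Par; [apply IHA, Hpq | apply IHB, Hrt].
  - apply HM_fb in HPQ as [M HPMQM].
    eapply rule_Fb; apply IHA, HPMQM.
Qed.

End HoareLogic.

Theorem theorem3p4 (S : TSMCSig) (Bas : Ob S -> Ob S -> Type)
  (bsem : forall X Y, Bas X Y -> Hom S X Y)
  (H : VerifFunctor S Bas bsem) (X Y : Ob S) (A : diag S Bas X Y)
  (P : HO H X) (Q : HO H Y) :
  derivable H A P Q <-> HM H (sem bsem A) P Q.
Proof.
  split; [apply derivable_sound | apply derivable_complete].
Qed.
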